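(* Let $G=(V,E)$ be a 4-regular 4-edge-connected graph, let $T$ be a spanning tree of $G$ with no vertex of degree four, rooted at a leaf $r$ of $T$, and let $L=E\setminus T$. Let $G'=(V',E')$, $T'$ and $L'=E'\setminus T'$ be the subdivided graph, tree and links. Then: (1) for any $F'\subseteq L'$ such that $T'+F'$ is 2-edge-connected, $T+F$ is 2-vertex-connected, where $F\subseteq L$ is the set of links corresponding to $F'$; and (2) for every edge $e'\in T'$ there are at least two links $\ell'_1,\ell'_2\in L'$ whose paths in $T'$ contain $e'$.
   Context: For a link $\ell\in L$, $P_\ell$ denotes the path in $T$ between the endpoints of $\ell$. The subdivided graph $G'$ is obtained from $G$ as follows: each tree edge $e=uw\in T$ is subdivided into two edges $uv_e$ and $v_ew$ with a new vertex $v_e$, and $T'$ consists of all these edges. For each link $\ell\in L$ a link $\ell'\in L'$ is created: for each endpoint $u$ of $\ell$, if $u$ is the root or a leaf of $T$ then $u$ is an endpoint of $\ell'$; if $u$ is an internal vertex of $T$, let $e$ be the (unique) edge of $P_\ell$ incident to $u$, and then $v_e$ is an endpoint of $\ell'$. This gives a bijection $\ell\leftrightarrow\ell'$ between $L$ and $L'$, and for $F'\subseteq L'$, $F$ denotes the corresponding subset of $L$. $T+F$ denotes the graph $(V,T\cup F)$. *)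

From mathcomp Require Import all_boot.
Set Implicit Arguments. Unset Strict Implicit. Unset Printing Implicit Defensive.

Section Graphs.
Variable W : finType.
Implicit Types (E F : {set {set W}}) (e : {set W}).

Definition is_edgeset E : Prop := forall e, e \in E -> #|e| = 2.

Definition adj E : rel W := fun u v => [set u; v] \in E.

Definition deg E (v : W) : nat := #|[set e in E | v \in e]|.

Definition connected E : Prop := forall u v, connect (adj E) u v.

Definition k_edge_connected (k : nat) E : Prop :=
  forall S : {set {set W}}, S \subset E -> #|S| < k -> connected (E :\: S).

Definition k_vertex_connected (k : nat) E : Prop :=
  k < #|W| /\
  forall X : {set W}, #|X| < k ->
    forall u v, u \notin X -> v \notin X ->
      connect (fun a b => [&& a \notin X, b \notin X & adj E a b]) u v.

Definition acyclic E : Prop :=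
  forall s : seq W, 2 < size s -> uniq s -> ~~ cycle (adj E) s.

Definition is_tree E : Prop := connected E /\ acyclic E.

(* edge e lies on the (simple) path of (W, F) from x to y; in a tree this is
   the unique path between x and y *)
Definition on_tree_path F (x y : W) e : Prop :=
  exists p : seq W, [/\ path (adj F) x p, last x p = y, uniq (x :: p) &
    e \in [seq [set a.1; a.2] | a <- zip (x :: p) p]].

Definition on_link_path F (l : {set W}) e : Prop :=
  exists x y, [/\ x != y, l = [set x; y] & on_tree_path F x y e].

End Graphs.

Section Subdivision.
Variables (V : finType) (T : {set {set V}}) (r : V).

(* the edges of T, used as the subdivision vertices v_e *)
Definition tedge := {e : {set V} | e \in T}.

(* vertex set V' of the subdivided graph: V plus one new vertex v_e per e in T *)
Definition subV := (V + tedge)%type.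

(* T' : each tree edge uw is replaced by u v_e and v_e w *)
Definition sub_tree : {set {set subV}} :=
  [set [set (inl u : subV); inr e] | u in [set: V], e in [set: tedge] & u \in val e].

Definition internal (u : V) : bool := (u != r) && (deg T u != 1).

(* x is the endpoint of l' associated with the endpoint u of the link
   l = uw (P_l is the tree path from u to w) *)
Definition end_img (u w : V) (x : subV) : Prop :=
  (~~ internal u /\ x = inl u) \/
  (internal u /\ exists e : tedge,
      [/\ u \in val e, on_tree_path T u w (val e) & x = inr e]).

Definition corr (l : {set V}) (l' : {set subV}) : Prop :=
  exists u w, [/\ u != w, l = [set u; w] &
    exists x y, [/\ end_img u w x, end_img w u y & l' = [set x; y]]].

End Subdivision.

Arguments sub_tree {V} T.
Arguments internal {V} T r u.
Arguments end_img {V} T r u w x.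
Arguments corr {V} T r l l'.
Arguments on_link_path {W} F l e.
Arguments on_tree_path {W} F x y e.

From mathcomp Require Import all_boot.
From mathcomp Require Import zify.
Set Implicit Arguments. Unset Strict Implicit. Unset Printing Implicit Defensive.

(* (1) Let z be a cut vertex of T + F. As z has at most three neighbours in T,
   some union C of components of T + F - z contains exactly one of them, u, and
   z is internal. Let S be the set of vertices of T' that lie in C or subdivide
   an edge meeting C. No edge of T' but z v_{uz} leaves S, and no link of F'
   does either: its ends are the images of the ends of a link of F, which
   leaves C only towards z, and the image of z subdivides the first edge of a
   tree path from z, whose other end is joined to C in T - z. So z v_{uz} would
   be a bridge of T' + F'.
   (2) Let e' = u v_e with e = uw and let C be the component of u in T - e. At
   least four edges of G leave C, and only e among them is a tree edge. If u
   is internal, the cuts of C and of C - u, each of size at least four, share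
   no edge at u, and the cut of C - u minus the edges at u lies in the cut of
   C; hence at least two links leave C while avoiding u. The image of such a
   link joins a vertex of T' inside C to one outside C, so its tree path in T'
   crosses e'. Images of distinct links differ, since two tree paths leaving
   an edge ab of T through a and through b end in different components of
   T - ab. *)

Lemma connect_map (T1 T2 : finType) (e1 : rel T1) (e2 : rel T2) (h : T1 -> T2) :
  (forall x y, e1 x y -> connect e2 (h x) (h y)) ->
  forall x y, connect e1 x y -> connect e2 (h x) (h y).
Proof.
move=> e12 x y /connectP[p + ->]; elim: p x => [|a p IH] x /=; first by rewrite connect0.
by case/andP=> /e12 xa /IH; apply: connect_trans xa.
Qed.

Section Graphs.
Variable W : finType.
Implicit Types (E F : {set {set W}}) (K : {set W}) (e : {set W}) (s : seq W).

Lemma adjC F : symmetric (adj F).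
Proof. by move=> a b; rewrite /adj setUC. Qed.

Lemma adj_setD1 F e a b : adj (F :\ e) a b = ([set a; b] != e) && adj F a b.
Proof. by rewrite /adj in_setD1. Qed.

Lemma eq_set2 (a b c d : W) : [set a; b] = [set c; d] ->
  (a = c /\ b = d) \/ (a = d /\ b = c).
Proof.
move=> abcd.
have ha : a \in [set c; d] by rewrite -abcd set21.
have hb : b \in [set c; d] by rewrite -abcd set22.
have hc : c \in [set a; b] by rewrite abcd set21.
have hd : d \in [set a; b] by rewrite abcd set22.
move: ha hb hc hd; rewrite !inE.
by do 4! case/orP=> /eqP ?; subst; auto.
Qed.

Lemma cards2_set2 e a : #|e| = 2 -> a \in e -> exists2 b, a != b & e = [set a; b].
Proof.
move/eqP/cards2P=> [x [y [xy ->]]]; rewrite !inE => /orP[]/eqP->; first by exists y.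
by exists x; rewrite 1?eq_sym // setUC.
Qed.

Lemma edgeset_subset E F : is_edgeset E -> F \subset E -> is_edgeset F.
Proof. by move=> E2 /subsetP FE f /FE /E2. Qed.

Lemma connect_preserve (g : rel W) (P : pred W) :
  (forall a b, P a -> g a b -> P b) -> forall x y, connect g x y -> P x -> P y.
Proof.
move=> gP x y /connectP[p + ->]; elim: p x => //= a p IH x /andP[xa pa] Px.
exact: IH pa (gP _ _ Px xa).
Qed.

Definition adj_in K F : rel W := fun a b => [&& a \in K, b \in K & adj F a b].

Lemma adj_inC K F : symmetric (adj_in K F).
Proof. by move=> a b; rewrite /adj_in adjC andbCA. Qed.

Lemma adj_in_sub K F : subrel (adj_in K F) (adj F).
Proof. by move=> a b /and3P[]. Qed.

Lemma adj_in_subset K F1 F2 : F1 \subset F2 -> subrel (adj_in K F1) (adj_in K F2).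
Proof. by move=> /subsetP sF a b /and3P[aK bK /sF abF]; rewrite /adj_in aK bK. Qed.

Lemma connect_adj_in_setD1 K F e x y :
  connect (adj_in K (F :\ e)) x y -> connect (adj_in K F) x y.
Proof. by apply: connect_sub => a b /(adj_in_subset (subD1set F e)) /connect1. Qed.

Lemma adj_in_setC1 F a b : subrel (adj_in [set~ a] F) (adj (F :\ [set a; b])).
Proof.
move=> c d /and3P[]; rewrite !in_setC1 adj_setD1 => ca da ->; rewrite andbT.
by apply/eqP => /eq_set2[[ac _]|[_ ad]]; [rewrite ac eqxx in ca | rewrite ad eqxx in da].
Qed.

Lemma connect_adj_in K F x y : (forall a b, a \in K -> adj F a b -> b \in K) ->
  x \in K -> connect (adj F) x y -> connect (adj_in K F) x y.
Proof.
move=> KF xK /connectP[p + ->]; elim: p x xK => [|a p IH] x xK /=; first by rewrite connect0.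
case/andP=> xa ap; have aK := KF _ _ xK xa.
by apply: connect_trans (IH _ aK ap); apply: connect1; rewrite /adj_in xK aK.
Qed.

Lemma connect_adj_in_mem K F x y : connect (adj_in K F) x y -> x \in K -> y \in K.
Proof. by apply: connect_preserve => a b _ /and3P[]. Qed.

Lemma path_adj_in K F x s : path (adj_in K F) x s ->
  (x \in K) || (last x s \in K) -> {subset x :: s <= K}.
Proof.
move=> pK xsK; apply/allP; elim: s x pK xsK => [|a s IH] x /=.
  by rewrite orbb andbT.
by case/andP=> /and3P[-> aK _] /IH; rewrite aK => /(_ isT) /andP[].
Qed.

(** * Tree paths *)

(* [on_tree_path F x y e] reads [e \in path_edges (x :: p)]. *)
Definition path_edges s := [seq [set c.1; c.2] | c <- zip s (behead s)].

Lemma path_edgesP s e : reflect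
  (exists s1 a b s2, s = s1 ++ [:: a, b & s2] /\ e = [set a; b]) (e \in path_edges s).
Proof.
apply: (iffP idP).
  elim: s => // x [|y s] // IH; rewrite inE => /orP[/eqP->|].
    by exists [::], x, y, s.
  by case/IH => s1 [a [b [s2 [-> ->]]]]; exists (x :: s1), a, b, s2.
case=> s1 [a [b [s2 [-> ->]]]]; elim: s1 => [|x s1 IH]; first exact: mem_head.
by case: s1 IH => [|y s1] IH; rewrite /= inE IH orbT.
Qed.

Lemma on_tree_path_first F x y e : on_tree_path F x y e -> x \in e ->
  exists2 b, e = [set x; b] & connect (adj_in [set~ x] F) b y.
Proof.
case=> -[|b p] [//= /andP[_ pF] <- /andP[xbp /andP[_ up]] ep xe].
have /path_edgesP[[|c s1] [a [a' [s2 []]]]] : e \in path_edges [:: x, b & p] := ep.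
  case=> <- <- _ ->; exists b => //; apply/connectP; exists p => //.
  elim: p b pF xbp {ep up} => [//|c p IH] b /andP[bc cp].
  rewrite !inE !negb_or => /andP[xb /andP[xc xp]].
  by rewrite /= /adj_in !in_setC1 eq_sym xb eq_sym xc bc IH // inE negb_or xc.
case=> _ s1E eE; move: xe xbp; rewrite s1E eE !inE => /orP[]/eqP->;
  by rewrite mem_cat !inE eqxx ?orbT.
Qed.

Lemma exists_on_tree_path F x y : connect (adj F) x y -> x != y ->
  exists2 b, [set x; b] \in F & on_tree_path F x y [set x; b].
Proof.
case/connectP=> p0 /shortenP[[|b p] /= pF up _ ->]; first by rewrite eqxx.
move=> _; case/andP: pF => xb pF; exists b => //; exists (b :: p).
by split => //=; [rewrite xb | rewrite inE eqxx].
Qed.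

Lemma tree_neighbor_toward F x z : connected F -> x != z ->
  exists2 n, [set n; z] \in F & connect (adj_in [set~ z] F) x n.
Proof.
move=> Fconn; rewrite eq_sym => zx.
have [b zbF /on_tree_path_first /(_ (set21 z b))[n zbn nx]] := exists_on_tree_path (Fconn z x) zx.
by exists n; rewrite 1?setUC -1?zbn // (sym_connect_sym (adj_inC _ _)).
Qed.

Lemma on_tree_path_cut F K x a b y : a \in K -> b \notin K -> [set a; b] \in F ->
  connect (adj_in K F) x a -> connect (adj_in (~: K) F) b y ->
  on_tree_path F x y [set a; b].
Proof.
move=> aK bK abF /connectP[p1 /shortenP[s1 ps1 us1 _] ea].
case/connectP=> p2 /shortenP[s2 ps2 us2 _] ey.
have s1K : {subset x :: s1 <= K} by apply: path_adj_in ps1 _; rewrite -ea aK orbT.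
have s2K : {subset b :: s2 <= ~: K} by apply: path_adj_in ps2 _; rewrite inE bK.
exists (s1 ++ b :: s2); split.
- rewrite cat_path (sub_path (@adj_in_sub K F) ps1) -ea /=.
  by rewrite (sub_path (@adj_in_sub _ F) ps2) andbT.
- by rewrite last_cat -ea.
- rewrite -cat_cons cat_uniq us1 us2 andbT; apply/hasPn => c /s2K; rewrite in_setC.
  by apply: contra => /s1K.
- change ([set a; b] \in path_edges ((x :: s1) ++ b :: s2)); apply/path_edgesP.
  by exists (belast x s1), a, b, s2; rewrite lastI -ea cat_rcons.
Qed.

Lemma acyclic_cut F a b : acyclic F -> [set a; b] \in F -> a != b ->
  ~~ connect (adj (F :\ [set a; b])) a b.
Proof.
move=> acF abF ab; apply/negP => /connectP[_ /shortenP[p pF up _] eb].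
case: p pF up eb => [|c [|d p]] pF up /= eb; first by rewrite eb eqxx in ab.
  by rewrite -eb /= adj_setD1 eqxx in pF.
apply: (negP (acF [:: a, c, d & p] isT up)).
rewrite /cycle rcons_path (sub_path _ pF) => [|x y]; last by rewrite adj_setD1 => /andP[].
by rewrite /= -eb adjC.
Qed.

Lemma on_tree_path_ends F a b xa xb : acyclic F -> [set a; b] \in F -> a != b ->
  on_tree_path F a xa [set a; b] -> on_tree_path F b xb [set a; b] ->
  ~~ connect (adj (F :\ [set a; b])) xa xb.
Proof.
move=> acF abF ab /on_tree_path_first /(_ (set21 a b))[b' eb bxa].
move=> /on_tree_path_first /(_ (set22 a b))[a' ea axb].
have sub c d : subrel (connect (adj_in [set~ c] F)) (connect (adj (F :\ [set c; d]))).
  by apply: connect_sub => x y /adj_in_setC1 h; apply: connect1 (h d).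
case/eq_set2: eb => [[_ bb']|[_ ba]]; last by rewrite ba eqxx in ab.
case/eq_set2: ea => [[ab' _]|[aa' _]]; first by rewrite ab' eqxx in ab.
subst a' b'.
apply/negP => xab; apply: (negP (acyclic_cut acF abF ab)).
have {}axb : connect (adj (F :\ [set a; b])) a xb.
  by rewrite -[[set a; b]]setUC; apply: sub b a _ _ axb.
apply: connect_trans axb _; rewrite (sym_connect_sym (adjC _) xb).
exact: connect_trans (sub a b _ _ bxa) xab.
Qed.

Definition bridge_side F u w := [set z | connect (adj (F :\ [set u; w])) u z].

Section BridgeSide.
Variables (F : {set {set W}}) (u w : W).
Local Notation g := [set u; w].
Local Notation C := (bridge_side F u w).

Lemma bridge_side_u : u \in C.
Proof. by rewrite inE connect0. Qed.

Lemma bridge_side_w : acyclic F -> g \in F -> u != w -> w \notin C.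
Proof. by move=> acF gF uw; rewrite inE acyclic_cut. Qed.

Lemma bridge_side_closed a b : a \in C -> adj (F :\ g) a b -> b \in C.
Proof. by rewrite !inE => ua /connect1; apply: connect_trans. Qed.

Lemma bridge_sideC_closed a b : a \notin C -> adj (F :\ g) a b -> b \notin C.
Proof. by move=> aC ab; apply: contra aC => /bridge_side_closed; apply; rewrite adjC. Qed.

Lemma bridge_side_edge c d : c \in C -> d \notin C -> [set c; d] \in F -> [set c; d] = g.
Proof.
move=> cC dC cdF; apply/eqP; apply: contraNT dC => cdg.
by apply: bridge_side_closed cC _; rewrite adj_setD1 cdg.
Qed.

Lemma connect_bridge_side z : z \in C -> connect (adj_in C F) u z.
Proof.
move=> zC; apply: connect_adj_in_setD1 (connect_adj_in _ bridge_side_u _) => //.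
  exact: bridge_side_closed.
by rewrite inE in zC.
Qed.

Lemma connect_bridge_sideC z : connected F -> z \notin C -> connect (adj_in (~: C) F) w z.
Proof.
move=> Fconn zC.
pose R x := connect (adj (F :\ g)) u x || connect (adj (F :\ g)) w x.
have : R z.
  apply: (connect_preserve (P := R) _ (Fconn u z)); last by rewrite /R connect0.
  move=> a b aR ab; case: (eqVneq [set a; b] g) => abg.
    have : b \in g by rewrite -abg set22.
    by rewrite !inE => /orP[]/eqP->; rewrite /R connect0 ?orbT.
  have ab' : adj (F :\ g) a b by rewrite adj_setD1 abg.
  by case/orP: aR => h; rewrite /R (connect_trans h (connect1 ab')) ?orbT.
case/orP=> [uz|wz]; first by rewrite inE uz in zC.
have wC : w \notin C by apply: contra zC; rewrite !inE => /connect_trans; apply.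
apply: connect_adj_in_setD1 (connect_adj_in _ _ wz); last by rewrite in_setC.
by move=> a b; rewrite !in_setC; apply: bridge_sideC_closed.
Qed.

End BridgeSide.

(** * Degrees and edge cuts *)

Lemma deg_subset E1 E2 v : E1 \subset E2 -> deg E1 v <= deg E2 v.
Proof.
move=> /subsetP E12; apply: subset_leq_card; apply/subsetP => f.
by rewrite !inE => /andP[/E12 -> ->].
Qed.

Lemma deg_le_card E v : is_edgeset E -> deg E v <= #|W|.
Proof.
move=> E2; apply: leq_trans (leq_imset_card (fun w => [set v; w]) W).
apply: subset_leq_card; apply/subsetP => f /[1!inE] /andP[fE vf].
by have [w _ ->] := cards2_set2 (E2 _ fE) vf; apply: imset_f.
Qed.

Definition boundary E K := [set f in E | ~~ [disjoint f & K] && ~~ (f \subset K)].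

Lemma boundaryP E K f : reflect
  [/\ f \in E, exists2 a, a \in f & a \in K & exists2 b, b \in f & b \notin K]
  (f \in boundary E K).
Proof.
rewrite inE -setI_eq0; apply: (iffP and3P) => [[fE /set0Pn[a] /[!inE] /andP[af aK]]|].
  by case/subsetPn=> b bf bK; split => //; [exists a | exists b].
case=> fE [a af aK] [b bf bK]; split => //; last by apply/subsetPn; exists b.
by apply/set0Pn; exists a; rewrite inE af.
Qed.

Lemma boundary_edge_connected k E K a b : k_edge_connected k E -> a \in K -> b \notin K ->
  k <= #|boundary E K|.
Proof.
move=> kE aK bK; rewrite leqNgt; apply/negP => small.
have sub : boundary E K \subset E by apply/subsetP => f /[1!inE] /andP[].
suff closed c d : c \in K -> adj (E :\: boundary E K) c d -> d \in K.
  by have := connect_preserve closed (kE _ sub small a b) aK; rewrite (negbTE bK).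
move=> cK; rewrite /adj in_setD => /andP[cdK cdE]; apply: contraNT cdK => dK.
by apply/boundaryP; split => //; [exists c | exists d]; rewrite // !inE eqxx ?orbT.
Qed.

Lemma boundary_off_vertex k E K u z b : is_edgeset E -> k_edge_connected k E ->
  deg E u <= k -> u \in K -> z \in K -> z != u -> b \notin K ->
  k <= 2 * #|boundary E K :\: [set f in E | u \in f]|.
Proof.
move=> E2 kE degu uK zK zu bK; set U := [set f in E | u \in f].
have cardK := boundary_edge_connected kE uK bK.
have cardK' : k <= #|boundary E (K :\ u)|.
  apply: (boundary_edge_connected (a := z) (b := b) kE).
    by rewrite !inE zu zK.
  by rewrite !inE (negbTE bK) andbF.
have sub : boundary E (K :\ u) :\: U \subset boundary E K :\: U.
  apply/subsetP => f /setDP[/boundaryP[fE [a af /setD1P[_ aK]] [c cf cK']] fU].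
  have cK : c \notin K.
    apply: contra cK' => cK; rewrite in_setD1 cK andbT; apply: contra fU => /eqP cu.
    by rewrite /U inE fE -cu cf.
  by rewrite in_setD fU; apply/boundaryP; split => //; [exists a | exists c].
(* an edge uv is in the cut of K iff v \notin K, and in that of K :\ u iff v \in K *)
have disj : (boundary E K :&: U) :&: (boundary E (K :\ u) :&: U) = set0.
  apply/setP => f; rewrite in_setI in_set0; apply/negP.
  case/andP=> /setIP[/boundaryP[fE _ [c cf cK]] fU] /setIP[/boundaryP[_ [a af /setD1P[au aK]] _] _].
  move: fU; rewrite /U inE fE /= => uf; have [v _ fuv] := cards2_set2 (E2 _ fE) uf.
  move: af cf; rewrite fuv !inE (negbTE au) /= => /eqP av /orP[]/eqP cv.
    by rewrite cv uK in cK.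
  by rewrite av -cv (negbTE cK) in aK.
have cardU : #|(boundary E K :&: U) :|: (boundary E (K :\ u) :&: U)| <= #|U|.
  by apply: subset_leq_card; rewrite subUset !subsetIr.
have := cardsUI (boundary E K :&: U) (boundary E (K :\ u) :&: U).
rewrite disj cards0 addn0.
have := cardsID U (boundary E K); have := cardsID U (boundary E (K :\ u)).
have := subset_leq_card sub; rewrite -/(deg E u) in cardU.
lia.
Qed.

Definition neighbors_in F z K := [set c in K | [set c; z] \in F].

Lemma card_neighbors_in F z K1 K2 : [disjoint K1 & K2] ->
  #|neighbors_in F z K1| + #|neighbors_in F z K2| <= deg F z.
Proof.
move=> K12; rewrite -cardsUI.
have -> : neighbors_in F z K1 :&: neighbors_in F z K2 = set0.
  apply/setP => c; rewrite !inE; apply/negP => /andP[/andP[c1 _] /andP[c2 _]].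
  by rewrite (disjointFr K12 c1) in c2.
rewrite cards0 addn0 -(@card_in_imset _ _ (fun c => [set c; z])).
  apply: subset_leq_card; apply/subsetP => _ /imsetP[c /setUP[]/setIdP[_ czF] ->];
  by rewrite inE czF set22.
by move=> c d _ _ /eq_set2[[]|[-> <-]].
Qed.

Lemma cut_vertex_side T F z x y : connected T -> deg T z <= 3 -> x != z -> y != z ->
  ~~ connect (adj_in [set~ z] (T :|: F)) x y ->
  1 < deg T z /\ exists (C : {set W}) u, [/\ z \notin C, neighbors_in T z C = [set u] &
    forall a b, a \in C -> b != z -> adj (T :|: F) a b -> b \in C].
Proof.
move=> Tconn degz xz yz xy; set R := adj_in [set~ z] (T :|: F).
have Rsym : connect_sym R := sym_connect_sym (adj_inC _ _).
pose A := [set c | connect R x c]; pose B := [set c | (c \notin A) && (c != z)].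
have zA : z \notin A.
  rewrite inE; apply/negP => /connect_adj_in_mem; rewrite !in_setC1 eqxx xz.
  by move/(_ isT).
have closA a b : a \in A -> b != z -> adj (T :|: F) a b -> b \in A.
  move=> aA bz ab; have az : a != z by apply: contraNneq zA => <-.
  move: aA; rewrite !inE => /connect_trans; apply; apply: connect1.
  by rewrite /R /adj_in !in_setC1 az bz.
have closB a b : a \in B -> b != z -> adj (T :|: F) a b -> b \in B.
  rewrite !inE => /andP[aA az] bz ab; rewrite bz andbT; apply: contra aA => bA.
  by apply: connect_trans bA (connect1 _); rewrite /R /adj_in !in_setC1 az bz adjC.
have [nA nAz xnA] := tree_neighbor_toward Tconn xz.
have [nB nBz ynB] := tree_neighbor_toward Tconn yz.
have sub c d : connect (adj_in [set~ z] T) c d -> connect R c d.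
  by apply: connect_sub => a b /(adj_in_subset (subsetUl T F)) /connect1.
have nAA : nA \in neighbors_in T z A by rewrite !inE nAz andbT sub.
have nBB : nB \in neighbors_in T z B.
  rewrite !inE nBz andbT; apply/andP; split.
    by apply: contra xy => /connect_trans; apply; rewrite Rsym; apply: sub.
  by have := connect_adj_in_mem ynB; rewrite !in_setC1 => ->.
have AB : [disjoint A & B].
  by rewrite -setI_eq0; apply/eqP/setP => c; rewrite !inE; case: (connect R x c).
have card := card_neighbors_in T z AB.
have posA : 0 < #|neighbors_in T z A| by apply/card_gt0P; exists nA.
have posB : 0 < #|neighbors_in T z B| by apply/card_gt0P; exists nB.
split; first by lia.
have single (C : {set W}) u : u \in neighbors_in T z C -> #|neighbors_in T z C| <= 1 ->
    neighbors_in T z C = [set u].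
  by move=> uN le1; apply/esym/eqP; rewrite eqEcard sub1set uN cards1 le1.
have [le1|le1] : #|neighbors_in T z A| <= 1 \/ #|neighbors_in T z B| <= 1 by lia.
  by exists A, nA; split => //; apply: single.
by exists B, nB; split => //; [rewrite !inE eqxx andbF | apply: single].
Qed.

End Graphs.

Arguments bridge_side_u {W F u w}.

(** * The subdivided tree *)

Section Subdivision.
Variables (V : finType) (T : {set {set V}}) (r : V).
Implicit Types (C K : {set V}) (f : tedge T).

Lemma sub_treeP (z : {set subV T}) :
  reflect (exists c f, c \in val f /\ z = [set inl c; inr f]) (z \in sub_tree T).
Proof.
apply: (iffP imset2P) => [[c f _] /[!inE] cf ->|[c [f [cf ->]]]]; first by exists c, f.
by exists c f; rewrite ?inE.
Qed.

Lemma sub_tree_edge c f : c \in val f -> [set inl c; inr f] \in sub_tree T.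
Proof. by move=> cf; apply/sub_treeP; exists c, f. Qed.

Lemma connect_sub_tree K (K' : {set subV T}) a b : (forall c, c \in K -> inl c \in K') ->
  (forall f c d, val f = [set c; d] -> c \in K -> d \in K -> inr f \in K') ->
  connect (adj_in K T) a b -> connect (adj_in K' (sub_tree T)) (inl a) (inl b).
Proof.
move=> KK' fK'; apply: connect_map => c d /and3P[cK dK cdT].
pose f : tedge T := Sub [set c; d] cdT; have fK : inr f \in K' := fK' f c d erefl cK dK.
apply: (@connect_trans _ _ (inr f)); apply: connect1.
  by rewrite /adj_in KK' // fK /adj sub_tree_edge //= set21.
by rewrite /adj_in KK' // fK adjC /adj sub_tree_edge //= set22.
Qed.

Lemma exists_end_img p q : connected T -> p != q -> exists x, end_img T r p q x.
Proof.
move=> Tconn pq; case: (boolP (internal T r p)) => ip; last by exists (inl p); left.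
have [b pbT pbpath] := exists_on_tree_path (Tconn p q) pq.
pose f : tedge T := Sub [set p; b] pbT.
by exists (inr f); right; split => //; exists f; rewrite /= set21.
Qed.

Lemma end_img_inj p1 q1 p2 q2 x : is_edgeset T -> acyclic T ->
  end_img T r p1 q1 x -> end_img T r p2 q2 x ->
  connect (adj (T :\ [set p1; p2])) q1 q2 -> p1 = p2.
Proof.
move=> T2 Tacyc img1 img2 q12.
case: img1 img2 => [[_ ->]|[_ [f [p1f path1 ->]]]] [[_ e2]|[_ [f' [p2f path2 e2]]]] //.
  by case: e2.
case: e2 => ff'; subst f'; case: (eqVneq p1 p2) => // p12; exfalso.
have [b _ fE] := cards2_set2 (T2 _ (valP f)) p1f.
move: p2f; rewrite fE !inE eq_sym (negbTE p12) => /eqP b2; subst b.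
rewrite fE in path1 path2; have := valP f; rewrite fE => p12T.
by have := on_tree_path_ends Tacyc p12T p12 path1 path2; rewrite q12.
Qed.

Definition touching C : {set subV T} :=
  [set z : subV T | match z with inl a => a \in C | inr f => ~~ [disjoint val f & C] end].

Definition inside C : {set subV T} :=
  [set z : subV T | match z with inl a => a \in C | inr f => val f \subset C end].

Lemma inside_inl C c : (inl c \in inside C) = (c \in C).
Proof. by rewrite inE. Qed.

Lemma inside_inr C f : (inr f \in inside C) = (val f \subset C).
Proof. by rewrite inE. Qed.

End Subdivision.

(** * No cut vertex in T + F *)

Section CutVertex.
Variables (V : finType) (T F : {set {set V}}) (F' : {set {set subV T}}) (r u v : V).
Variable C : {set V}.
Hypothesis T2 : is_edgeset T.
Hypothesis F'F : forall l', l' \in F' -> exists p q x y, [/\ [set p; q] \in F,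
  end_img T r p q x, end_img T r q p y & l' = [set x; y]].
Hypothesis bridgeless : k_edge_connected 2 (sub_tree T :|: F').
Hypotheses (vC : v \notin C) (intv : internal T r v).
Hypothesis Nv : neighbors_in T v C = [set u].
Hypothesis closC : forall a b, a \in C -> b != v -> adj (T :|: F) a b -> b \in C.

Lemma neighbor_in_C_eq c : c \in C -> [set c; v] \in T -> c = u.
Proof. by move=> cC cvT; apply/set1P; rewrite -Nv /neighbors_in inE cC. Qed.

Lemma u_in_C : u \in C.
Proof. by have := set11 u; rewrite -Nv /neighbors_in inE => /andP[]. Qed.

Lemma uv_in_T : [set u; v] \in T.
Proof. by have := set11 u; rewrite -{1}Nv /neighbors_in inE => /andP[]. Qed.

Lemma u_neq_v : u != v.
Proof. by apply: contraNneq vC => <-; apply: u_in_C. Qed.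

Lemma closC_tree a b : a \in C -> b != v -> [set a; b] \in T -> b \in C.
Proof. by move=> aC bv abT; apply: closC aC bv _; rewrite /adj inE abT. Qed.

Lemma connect_avoid_closed a b : connect (adj_in [set~ v] T) a b -> a \in C -> b \in C.
Proof.
apply: connect_preserve => c d cC /and3P[_]; rewrite in_setC1; exact: closC_tree.
Qed.

Lemma end_img_touching q p y : q \in C -> end_img T r q p y -> y \in touching T C.
Proof.
move=> qC [[_ ->]|[_ [f [qf _ ->]]]]; rewrite inE //.
by rewrite -setI_eq0; apply/set0Pn; exists q; rewrite inE qf.
Qed.

Lemma end_img_touching_src p q x : x \in touching T C -> end_img T r p q x ->
  p \in C \/ (p = v /\ q \in C).
Proof.
move=> xC [[_ xp]|[_ [f [pf fpath xf]]]]; first by left; rewrite xp inE in xC.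
move: xC; rewrite xf inE.
rewrite -setI_eq0 => /set0Pn[c /setIP[cf cC]].
have [d _ fE] := cards2_set2 (T2 (valP f)) cf.
move: pf fpath; rewrite fE !inE => /orP[/eqP->|/eqP->]; first by left.
have cdT : [set c; d] \in T by rewrite -fE (valP f).
case: (eqVneq d v) => [dv|dv] path_dq; last by left; apply: closC_tree cC dv cdT.
right; split => //; subst d; have cu := neighbor_in_C_eq cC cdT; subst c.
case/on_tree_path_first: path_dq => [|b /eq_set2[[uv _]|[<- _]] bq]; first by rewrite set22.
  by move: u_neq_v; rewrite uv eqxx.
exact: connect_avoid_closed bq u_in_C.
Qed.

Lemma touching_link p q x y : [set p; q] \in F -> end_img T r p q x -> end_img T r q p y ->
  x \in touching T C -> y \in touching T C.
Proof.
move=> pqF px qy xS; have [pC|[_ qC]] := end_img_touching_src xS px; last first.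
  exact: end_img_touching qC qy.
case: (eqVneq q v) => [qv|qv]; last first.
  by apply: end_img_touching (closC pC qv _) qy; rewrite /adj inE pqF orbT.
subst q; case: qy => [[niv _]|[_ [g [vg gpath ->]]]]; first by rewrite intv in niv.
case/on_tree_path_first: gpath => // b gE bp.
rewrite inE gE -setI_eq0; apply/set0Pn; exists b; rewrite !inE eqxx orbT /=.
by apply: connect_avoid_closed pC; rewrite (sym_connect_sym (adj_inC _ _)).
Qed.

Lemma touching_sub_tree a b : a \in touching T C -> adj (sub_tree T) a b ->
  b \in touching T C \/ exists2 f : tedge T, val f = [set u; v] & [set a; b] = [set inr f; inl v].
Proof.
move=> aS /sub_treeP[c [f [cf /eq_set2[[ea eb]|[ea eb]]]]]; subst a b; rewrite inE in aS.
  by left; rewrite inE -setI_eq0; apply/set0Pn; exists c; rewrite inE cf aS.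
move: aS; rewrite -setI_eq0 => /set0Pn[c0 /setIP[c0f c0C]].
have [d _ fE] := cards2_set2 (T2 (valP f)) c0f.
move: cf; rewrite fE !inE => /orP[/eqP->|/eqP->]; first by left.
have c0dT : [set c0; d] \in T by rewrite -fE (valP f).
case: (eqVneq d v) => [dv|dv]; last by left; apply: closC_tree c0C dv c0dT.
by subst d; right; exists f; rewrite // fE (neighbor_in_C_eq c0C c0dT).
Qed.

Lemma cut_vertex_absurd : False.
Proof.
pose e0 : tedge T := Sub [set u; v] uv_in_T.
have e0T' : [set inl v; inr e0] \in sub_tree T by apply: sub_tree_edge; rewrite /= set22.
have := bridgeless (S := [set [set inl v; inr e0]]).
rewrite sub1set inE e0T' cards1 => /(_ isT isT (inl u) (inl v)) uv.
suff : inl v \in touching T C by rewrite inE (negbTE vC).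
apply: (connect_preserve (P := fun z => z \in touching T C) _ uv); last by rewrite inE u_in_C.
move=> a b aS; rewrite /adj in_setD in_set1 in_setU => /andP[ne /orP[abT'|abF']].
  case: (touching_sub_tree aS abT') => // -[f fE abE].
  have fe0 : f = e0 by apply: val_inj.
  by rewrite abE fe0 setUC eqxx in ne.
have [p [q [x [y [pqF px qy /eq_set2[[ax by_]|[ay bx]]]]]]] := F'F abF'; subst a b.
  exact: touching_link pqF px qy aS.
by apply: touching_link qy px aS; rewrite setUC.
Qed.

End CutVertex.

Lemma two_vertex_connected_of_bridgeless (V : finType) (E T F : {set {set V}})
    (F' : {set {set subV T}}) (r : V) :
  is_edgeset E -> (forall v, deg E v = 4) -> T \subset E -> is_tree T ->
  (forall v, deg T v != 4) -> deg T r = 1 ->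
  (forall l', l' \in F' -> exists p q x y, [/\ [set p; q] \in F,
     end_img T r p q x, end_img T r q p y & l' = [set x; y]]) ->
  k_edge_connected 2 (sub_tree T :|: F') -> k_vertex_connected 2 (T :|: F).
Proof.
move=> E2 E4 TE [Tconn _] T4 degr F'F bridgeless.
have T2 := edgeset_subset E2 TE.
split; first by have := deg_le_card r E2; rewrite E4; lia.
move=> X; rewrite ltnS leq_eqVlt ltnS leqn0.
case/orP=> [/cards1P[z ->]|/eqP/cards0_eq -> x y _ _]; last first.
  apply: connect_sub (Tconn x y) => a b ab; apply: connect1.
  by rewrite !in_set0 /adj in_setU; apply/orP; left.
move=> x y; rewrite !in_set1 => xz yz.
have eqR : (fun a b => [&& a \notin [set z], b \notin [set z] & adj (T :|: F) a b])
    =2 adj_in [set~ z] (T :|: F) by move=> a b; rewrite /adj_in !in_setC1 !in_set1.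
rewrite (eq_connect eqR); apply/negPn/negP => xy.
have degz : deg T z <= 3.
  by have := deg_subset z TE; rewrite E4 leq_eqVlt (negbTE (T4 z)).
have [deg2 [C [u [zC Nz closC]]]] := cut_vertex_side Tconn degz xz yz xy.
have intz : internal T r z.
  rewrite /internal; apply/andP; split; last by apply: contraTneq deg2 => ->.
  by apply: contraTneq deg2 => ->; rewrite degr.
exact: cut_vertex_absurd T2 F'F bridgeless zC intz Nz closC.
Qed.

(** * Links covering an edge of T' *)

Section LinkCover.
Variables (V : finType) (E T : {set {set V}}) (r : V).
Hypotheses (E2 : is_edgeset E) (E4 : forall v, deg E v = 4) (E4c : k_edge_connected 4 E).
Hypotheses (TE : T \subset E) (Tconn : connected T) (Tacyc : acyclic T).
Variables (e : tedge T) (u w : V).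
Hypotheses (eE : val e = [set u; w]) (uw : u != w).
Local Notation C := (bridge_side T u w).

Let T2 : is_edgeset T := edgeset_subset E2 TE.

Lemma uw_in_T : [set u; w] \in T.
Proof. by rewrite -eE (valP e). Qed.

Lemma w_notin_C : w \notin C.
Proof. exact: bridge_side_w Tacyc uw_in_T uw. Qed.

Lemma connect_inside x : x \in inside T C -> connect (adj_in (inside T C) (sub_tree T)) (inl u) x.
Proof.
have lift c : c \in C -> connect (adj_in (inside T C) (sub_tree T)) (inl u) (inl c).
  move=> cC; apply: connect_sub_tree (connect_bridge_side cC) => [a|f a b fE aC bC].
    by rewrite inside_inl.
  by rewrite inside_inr fE subUset !sub1set aC bC.
case: x => [a|f]; rewrite ?inside_inl ?inside_inr; first exact: lift.
move=> fC; have /eqP/cards2P[c [d [_ fE]]] := T2 (valP f).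
have cC : c \in C by apply: (subsetP fC); rewrite fE set21.
apply: connect_trans (lift c cC) (connect1 _).
by rewrite /adj_in inside_inl inside_inr cC fC /adj sub_tree_edge // fE set21.
Qed.

Lemma connect_outside y : y \notin inside T C ->
  connect (adj_in (~: inside T C) (sub_tree T)) (inr e) y.
Proof.
have lift d : d \notin C -> connect (adj_in (~: inside T C) (sub_tree T)) (inl w) (inl d).
  move=> dC; apply: connect_sub_tree (connect_bridge_sideC Tconn dC) => [a|f a b fE aC bC].
    by rewrite !in_setC inside_inl.
  by move: aC; rewrite !in_setC inside_inr fE subUset sub1set => /negbTE->.
have ew : adj_in (~: inside T C) (sub_tree T) (inr e) (inl w).
  rewrite /adj_in !in_setC inside_inl inside_inr eE subUset !sub1set (negbTE w_notin_C) andbF /=.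
  by rewrite adjC /adj sub_tree_edge // eE set22.
move=> yC; apply: connect_trans (connect1 ew) _.
case: y yC => [q|g]; rewrite ?inside_inl ?inside_inr; first exact: lift.
case/subsetPn=> d dg dC; apply: connect_trans (lift d dC) (connect1 _).
rewrite /adj_in !in_setC inside_inl inside_inr dC /adj sub_tree_edge // andbT.
by apply/subsetPn; exists d.
Qed.

Lemma on_tree_path_crossing x y : x \in inside T C -> y \notin inside T C ->
  on_tree_path (sub_tree T) x y [set inl u; inr e].
Proof.
move=> xC yC; apply: on_tree_path_cut (connect_outside yC).
- by rewrite inside_inl bridge_side_u.
- by rewrite inside_inr eE subUset !sub1set (negbTE w_notin_C) andbF.
- by rewrite sub_tree_edge // eE set21.
- by rewrite (sym_connect_sym (adj_inC _ _)) connect_inside.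
Qed.

Lemma end_img_inside p q x : p \in C -> (internal T r p -> p != u) ->
  end_img T r p q x -> x \in inside T C.
Proof.
move=> pC pu [[_ ->]|[ip [f [pf _ ->]]]]; first by rewrite inside_inl.
have [b _ fE] := cards2_set2 (T2 (valP f)) pf; rewrite inside_inr fE subUset !sub1set pC.
apply: contraT => bC; have pbT : [set p; b] \in T by rewrite -fE (valP f).
case/eq_set2: (bridge_side_edge pC bC pbT) => [[pu' _]|[pw _]].
  by move: (pu ip); rewrite pu' eqxx.
by rewrite pw (negbTE w_notin_C) in pC.
Qed.

Lemma end_img_outside q p y : q \notin C -> end_img T r q p y -> y \notin inside T C.
Proof.
move=> qC [[_ ->]|[_ [g [qg _ ->]]]]; rewrite ?inside_inl ?inside_inr //.
by apply/subsetPn; exists q.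
Qed.

Lemma connect_outside_setD1 (h : {set V}) a b : h \subset C -> a \notin C -> b \notin C ->
  connect (adj (T :\ h)) a b.
Proof.
move=> hC aC bC.
have lift : subrel (connect (adj_in (~: C) T)) (connect (adj (T :\ h))).
  apply: connect_sub => c d /and3P[cC _ cd]; apply: connect1.
  rewrite adj_setD1 cd andbT; apply: contraTneq cC => cdh.
  by rewrite in_setC negbK (subsetP hC) // -cdh set21.
apply: connect_trans (lift _ _ (connect_bridge_sideC Tconn bC)).
by rewrite (sym_connect_sym (adjC _)) (lift _ _ (connect_bridge_sideC Tconn aC)).
Qed.

Lemma link_image_inj p1 q1 x1 y1 p2 q2 x2 y2 :
  p1 \in C -> p2 \in C -> q1 \notin C -> q2 \notin C ->
  end_img T r p1 q1 x1 -> end_img T r q1 p1 y1 ->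
  end_img T r p2 q2 x2 -> end_img T r q2 p2 y2 ->
  x1 \in inside T C -> y2 \notin inside T C ->
  [set x1; y1] = [set x2; y2] -> [set p1; q1] = [set p2; q2].
Proof.
move=> p1C p2C q1C q2C px1 qy1 px2 qy2 x1C y2C.
case/eq_set2=> [[ex ey]|[exy _]]; last by rewrite -exy x1C in y2C.
subst x2 y2; have p12 : p1 = p2.
  apply: end_img_inj T2 Tacyc px1 px2 (connect_outside_setD1 _ q1C q2C).
  by rewrite subUset !sub1set p1C.
by subst p2; rewrite (end_img_inj T2 Tacyc qy1 qy2 (connect0 _ _)).
Qed.

Definition cross_links :=
  if internal T r u then boundary E C :\: [set f in E | u \in f] else boundary E C :\ [set u; w].

Lemma other_neighbor_in_C : internal T r u -> exists2 z, z \in C & z != u.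
Proof.
case/andP=> _ deg1.
have : 1 < deg T u.
  rewrite ltn_neqAle eq_sym deg1 /= card_gt0; apply/set0Pn; exists [set u; w].
  by rewrite inE uw_in_T set21.
case/card_gt1P=> f1 [f2 [/[!inE] /andP[f1T uf1] /andP[f2T uf2] f12]].
have [f f12' [fT uf]] : exists2 f, f != [set u; w] & f \in T /\ u \in f.
  case: (eqVneq f1 [set u; w]) => [f1uw|]; last by exists f1.
  by exists f2; [rewrite -f1uw eq_sym | ].
have [z uz fE] := cards2_set2 (T2 fT) uf.
exists z; last by rewrite eq_sym.
by apply: bridge_side_closed bridge_side_u _; rewrite adj_setD1 /adj -fE f12' fT.
Qed.

Lemma cross_links_card : 1 < #|cross_links|.
Proof.
have uwB : [set u; w] \in boundary E C.
  apply/boundaryP; split; first exact: subsetP TE _ uw_in_T.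
    by exists u; rewrite ?set21 ?bridge_side_u.
  by exists w; rewrite ?set22 ?w_notin_C.
have B4 := boundary_edge_connected E4c bridge_side_u w_notin_C.
rewrite /cross_links; case: ifP => [iu|_]; last first.
  by move: B4; rewrite (cardsD1 [set u; w]) uwB add1n ltnS; apply: leq_trans.
have [z zC zu] := other_neighbor_in_C iu.
have := boundary_off_vertex E2 E4c (eq_leq (E4 u)) bridge_side_u zC zu w_notin_C; lia.
Qed.

Lemma cross_linksP l : l \in cross_links -> l \in E :\: T /\
  exists p q, [/\ l = [set p; q], p \in C, q \notin C & (internal T r p -> p != u)].
Proof.
have uwE : [set u; w] \in E := subsetP TE _ uw_in_T.
move=> lL; have [lB lg ul] : [/\ l \in boundary E C, l != [set u; w] &
    internal T r u -> u \notin l].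
  move: lL; rewrite /cross_links; case: ifP => iu; last by case/setD1P.
  case/setDP=> lB; rewrite inE negb_and => lU; have /boundaryP[lE _ _] := lB.
  rewrite lE /= in lU; split => //; apply: contraNneq lU => ->; exact: set21.
case/boundaryP: (lB) => lE [p pl pC] [q ql qC].
have [q' pq' lE'] := cards2_set2 (E2 lE) pl.
have lpq : l = [set p; q].
  by move: ql; rewrite lE' !inE => /orP[/eqP qp|/eqP->] //; rewrite qp pC in qC.
split.
  rewrite in_setD lE andbT; apply: contra lg => lT.
  by rewrite lpq (bridge_side_edge pC qC) // -lpq.
exists p, q; split => // ip; apply: contraTneq pl => pu.
by rewrite pu; apply: ul; rewrite -pu.
Qed.

Lemma link_image p q : p \in C -> q \notin C -> (internal T r p -> p != u) ->
  exists x y, [/\ end_img T r p q x, end_img T r q p y, x \in inside T C & y \notin inside T C].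
Proof.
move=> pC qC pu; have pq : p != q by apply: contraNneq qC => <-.
have [x px] := exists_end_img r Tconn pq.
have [y qy] : exists y, end_img T r q p y by apply: exists_end_img; rewrite // eq_sym.
by exists x, y; split => //; [apply: end_img_inside px | apply: end_img_outside qy].
Qed.

Lemma corr_link_image p q x y : p \in C -> q \notin C ->
  end_img T r p q x -> end_img T r q p y -> corr T r [set p; q] [set x; y].
Proof.
by move=> pC qC px qy; exists p, q; split => //; [apply: contraNneq qC => <- | exists x, y].
Qed.

Lemma on_link_path_image x y : x \in inside T C -> y \notin inside T C ->
  on_link_path (sub_tree T) [set x; y] [set inl u; inr e].
Proof.
move=> xC yC; exists x, y; split => //; first by apply: contraNneq yC => <-.
exact: on_tree_path_crossing.
Qed.

Lemma links_cover_edge : exists l1 l2 l1' l2',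
  [/\ l1 \in E :\: T, l2 \in E :\: T, corr T r l1 l1', corr T r l2 l2'
    & [/\ l1' != l2', on_link_path (sub_tree T) l1' [set inl u; inr e]
        & on_link_path (sub_tree T) l2' [set inl u; inr e]]].
Proof.
case/card_gt1P: cross_links_card => l1 [l2 [l1L l2L l12]].
have [l1ET [p1 [q1 [l1E p1C q1C pu1]]]] := cross_linksP l1L.
have [l2ET [p2 [q2 [l2E p2C q2C pu2]]]] := cross_linksP l2L.
subst l1 l2.
have [x1 [y1 [px1 qy1 x1C y1C]]] := link_image p1C q1C pu1.
have [x2 [y2 [px2 qy2 x2C y2C]]] := link_image p2C q2C pu2.
exists [set p1; q1], [set p2; q2], [set x1; y1], [set x2; y2].
split; [by [] | by [] | exact: corr_link_image | exact: corr_link_image |].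
split; [|exact: on_link_path_image ..].
by apply: contraNneq l12 => /(link_image_inj p1C p2C q1C q2C px1 qy1 px2 qy2 x1C y2C) ->.
Qed.

End LinkCover.

Unset Implicit Arguments.

Theorem lemma15 (V : finType) (E T : {set {set V}}) (r : V) :
  is_edgeset E ->
  (forall v : V, deg E v = 4) ->
  k_edge_connected 4 E ->
  T \subset E -> is_tree T ->
  (forall v : V, deg T v != 4) ->
  deg T r = 1 ->
  (* (1) *)
  (forall F' : {set {set subV T}},
     (forall l', l' \in F' -> exists l, l \in E :\: T /\ corr T r l l') ->
     k_edge_connected 2 (sub_tree T :|: F') ->
     forall F : {set {set V}}, F \subset E :\: T ->
     (forall l, l \in E :\: T -> (l \in F <-> exists l', l' \in F' /\ corr T r l l')) ->
     k_vertex_connected 2 (T :|: F))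
  /\
  (* (2) *)
  (forall e', e' \in sub_tree T ->
     exists l1 l2 l1' l2',
       [/\ l1 \in E :\: T, l2 \in E :\: T, corr T r l1 l1', corr T r l2 l2'
         & [/\ l1' != l2', on_link_path (sub_tree T) l1' e'
             & on_link_path (sub_tree T) l2' e']]).
Proof.
move=> E2 E4 E4c TE Ttree T4 degr; split.
  move=> F' F'L bridgeless F _ FL.
  apply: two_vertex_connected_of_bridgeless E2 E4 TE Ttree T4 degr _ bridgeless.
  move=> l' l'F'.
  have [l [lL ll']] := F'L l' l'F'; have [p [q [_ lE [x [y [px qy l'E]]]]]] := ll'.
  by exists p, q, x, y; split => //; rewrite -lE; apply/(FL _ lL); exists l'.
move=> _ /sub_treeP[u [e [ue ->]]].
have [w uw eE] := cards2_set2 (edgeset_subset E2 TE (valP e)) ue.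
by case: Ttree => Tconn Tacyc; apply: (links_cover_edge r E2 E4 E4c TE Tconn Tacyc eE uw).
Qed.
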